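(* Let $H_0$ be a Hermitian operator on a finite-dimensional Hilbert space with ground-space projection $P_0$, $Q_0=I-P_0$, ground energy $E_0$, $G=Q_0(E_0I-H_0)^{-1}Q_0$, and $V$ Hermitian. Suppose $L$ is an integer with $P_0\Gamma(n)P_0\subseteq\mathbb{C}P_0$ for all $n<L$. Then $P_0\hat S^{2j-1}(V_{\mathrm{od}})_{n-1}P_0\in\mathbb{C}P_0$ for all $j\ge1$ and all $n<L$, and $P_0\hat S^{2j-1}(V_{\mathrm{od}})_{L-1}P_0\in\mathbb{C}P_0$ for all $j>1$.
   Context: $\Gamma(n)$ is the linear span of operators $Z_0VZ_1V\cdots Z_{n-1}VZ_n$ ($n$ factors of $V$) with each $Z_j\in\{P_0,Q_0\}\cup\{G^m:m\in\mathbb{N}\}$. Set $V_{\mathrm d}=P_0VP_0+Q_0VQ_0$, $V_{\mathrm{od}}=P_0VQ_0+Q_0VP_0$, $\mathcal{L}(X)=P_0XG-GXP_0$, $\mathrm{ad}_S(X)=[S,X]$, $a_m=2^m\beta_m/m!$ with $\beta_m$ the Bernoulli numbers. Define $S_1=\mathcal{L}(V_{\mathrm{od}})$, $S_2=-\mathcal{L}(\mathrm{ad}_{V_{\mathrm d}}(S_1))$, and for $n\ge3$, $S_n=-\mathcal{L}(\mathrm{ad}_{V_{\mathrm d}}(S_{n-1}))+\sum_{j\ge1}a_{2j}\mathcal{L}(\hat S^{2j}(V_{\mathrm{od}})_{n-1})$, where $\hat S^k(V_{\mathrm{od}})_m=\sum_{n_1,\dots,n_k\ge1,\ \sum_r n_r=m}\mathrm{ad}_{S_{n_1}}\cdots\mathrm{ad}_{S_{n_k}}(V_{\mathrm{od}})$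 (an empty sum being $0$). *)

From HB Require Import structures.
From mathcomp Require Import all_boot all_order all_algebra.
Set Implicit Arguments. Unset Strict Implicit. Unset Printing Implicit Defensive.
Import Order.TTheory GRing.Theory Num.Theory.
Local Open Scope ring_scope.

(* Operators on a d-dimensional Hilbert space C^d are d x d matrices over a
   numeric algebraically closed field C (e.g. algC); conjugation is Num.conj. *)

Section Defs.
Variables (C : numClosedFieldType) (d : nat).
Local Notation M := 'M[C]_d.

Definition adjmx (A : M) : M := map_mx Num.conj A^T.
Definition is_hermitian (A : M) : Prop := adjmx A = A.

Definition ground_energy (H0 : M) (E0 : C) : Prop :=
  eigenvalue H0 E0 /\ (forall a, eigenvalue H0 a -> E0 <= a).

Definition ground_proj (H0 : M) (E0 : C) (P0 : M) : Prop :=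
  [/\ P0 *m P0 = P0, is_hermitian P0 & (P0 == eigenspace H0 E0)%MS].

Definition Qc (P0 : M) : M := 1%:M - P0.

(* G = Q0 (E0 I - H0)^{-1} Q0, the inverse being taken on the range of Q0;
   concretely (E0 I - H0 + P0) is invertible and agrees with E0 I - H0 there. *)
Definition resolvent (H0 : M) (E0 : C) (P0 : M) : M :=
  Qc P0 *m invmx (E0%:M - H0 + P0) *m Qc P0.

(* the factors Z_j of the words generating Gamma(n) *)
Inductive zfac := ZP | ZQ | ZG of nat.

Variables (P0 G V : M).

Definition zval (z : zfac) : M :=
  match z with ZP => P0 | ZQ => Qc P0 | ZG m => G ^+ m end.

Fixpoint word (z0 : zfac) (zs : seq zfac) : M :=
  match zs with
  | [::] => zval z0
  | z1 :: zs' => zval z0 *m V *m word z1 zs'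
  end.

Definition in_Gamma (n : nat) (X : M) : Prop :=
  exists (k : nat) (c : 'I_k -> C) (z0 : 'I_k -> zfac) (zs : 'I_k -> seq zfac),
    (forall i, size (zs i) = n) /\ X = \sum_(i < k) c i *: word (z0 i) (zs i).

Definition Vd : M := P0 *m V *m P0 + Qc P0 *m V *m Qc P0.
Definition Vod : M := P0 *m V *m Qc P0 + Qc P0 *m V *m P0.
Definition Lop (X : M) : M := P0 *m X *m G - G *m X *m P0.
Definition ad (S X : M) : M := S *m X - X *m S.

Fixpoint bern_seq (m : nat) : seq C :=
  match m with
  | 0 => [:: 1]
  | m'.+1 => let s := bern_seq m' in
      rcons s (- (m'.+2%:R)^-1 * \sum_(k < m'.+1) 'C(m'.+2, k)%:R * s`_k)
  end.
Definition bernoulli (m : nat) : C := (bern_seq m)`_m.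
Definition acoef (m : nat) : C := 2%:R ^+ m * bernoulli m / (m`!)%:R.

(* Shat^k(Vod)_m given the sequence S, summing over (n_1,..,n_k), n_r >= 1,
   sum n_r = m, of ad_{S n_1} ... ad_{S n_k} (Vod).  (Each n_r <= m.) *)
Definition Shat_of (S : nat -> M) (k m : nat) : M :=
  \sum_(t : k.-tuple 'I_m.+1 |
          all (fun i : 'I_m.+1 => 0 < (i : nat))%N t &&
          (\sum_(i <- t) (i : nat) == m)%N)
     foldr (fun (i : 'I_m.+1) X => ad (S i) X) Vod t.

Definition Snext (S : nat -> M) (n : nat) : M :=
  if n == 1%N then Lop Vod
  else if n == 2%N then - Lop (ad Vd (S 1%N))
  else - Lop (ad Vd (S n.-1))
       + \sum_(1 <= j < n) acoef (2 * j) *: Lop (Shat_of S (2 * j) n.-1).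
(* the sum over j >= 1 is finite: Shat^{2j}(Vod)_{n-1} = 0 once 2j > n-1 *)

(* [:: S_0; S_1; ..; S_N] with the dummy S_0 = 0 *)
Fixpoint Sseq (N : nat) : seq M :=
  match N with
  | 0 => [:: 0]
  | N'.+1 => let s := Sseq N' in rcons s (Snext (fun i => s`_i) N'.+1)
  end.

Definition Sgen (n : nat) : M := (Sseq n)`_n.
Definition Shat (k m : nat) : M := Shat_of Sgen k m.

End Defs.

From mathcomp Require Import all_boot all_order all_algebra.
From mathcomp Require Import zify.
Import Order.TTheory GRing.Theory Num.Theory.
Set Implicit Arguments. Unset Strict Implicit. Unset Printing Implicit Defensive.
Local Open Scope ring_scope.

(* Every generator S_n is off-diagonal with respect to P0 + Q0 = 1 and lies in
   Gamma(n), so Shat^k(Vod)_(n-1) lies in Gamma(n) and the first claim is the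
   hypothesis.  For k = 2j - 1 >= 3, a summand of Shat^k(Vod)_(L-1) has the form
   ad_A ad_B ad_C D with A, B, C, D off-diagonal, of positive degrees adding up to
   L.  Each of the eight terms P0 W1 W2 W3 W4 P0 of its corner factors as
   (P0 W1 W2 P0) (P0 W3 W4 P0) because W1 W2 is block-diagonal, and both factors
   come from Gamma of degree < L. *)

Section ProjectionCalculus.
Variables (C : numClosedFieldType) (d : nat) (P0 Q0 G V : 'M[C]_d).
(* Q0 is a variable rather than [Qc P0] so that rewriting with [mulmxBr] cannot
   unfold it into [1%:M - P0]. *)
Hypothesis Q0_def : Qc P0 = Q0.
Hypothesis P0_idem : P0 *m P0 = P0.
Hypothesis Q0_mulG : Q0 *m G = G.
Hypothesis G_mulQ0 : G *m Q0 = G.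

Local Notation Gamma := (in_Gamma P0 G V).

Lemma P0_mulQ0 : P0 *m Q0 = 0.
Proof. by rewrite -Q0_def /Qc mulmxBr mulmx1 P0_idem subrr. Qed.

Lemma Q0_mulP0 : Q0 *m P0 = 0.
Proof. by rewrite -Q0_def /Qc mulmxBl mul1mx P0_idem subrr. Qed.

Lemma Q0_idem : Q0 *m Q0 = Q0.
Proof. by rewrite -{1}Q0_def /Qc mulmxBl mul1mx P0_mulQ0 subr0. Qed.

Lemma P0_mulG : P0 *m G = 0.
Proof. by rewrite -Q0_mulG mulmxA P0_mulQ0 mul0mx. Qed.

Lemma G_mulP0 : G *m P0 = 0.
Proof. by rewrite -G_mulQ0 -mulmxA Q0_mulP0 mulmx0. Qed.

Lemma zval_mulmx z1 z2 : zval P0 G z1 *m zval P0 G z2 = 0 \/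
  exists z3, zval P0 G z1 *m zval P0 G z2 = zval P0 G z3.
Proof.
have GS n : G ^+ n.+1 = G *m G ^+ n by rewrite exprS mulmxE.
have GSr n : G ^+ n.+1 = G ^+ n *m G by rewrite exprSr mulmxE.
case: z1 => [||[|m]]; case: z2 => [||[|n]] /=;
  rewrite ?Q0_def ?expr0 -?idmxE ?mulmx1 ?mul1mx.
- by right; exists ZP.
- by left; rewrite P0_mulQ0.
- by right; exists ZP.
- by left; rewrite GS mulmxA P0_mulG mul0mx.
- by left; rewrite Q0_mulP0.
- by right; exists ZQ; rewrite /= Q0_def Q0_idem.
- by right; exists ZQ.
- by right; exists (ZG n.+1); rewrite /= GS mulmxA Q0_mulG.
- by right; exists ZP.
- by right; exists ZQ.
- by right; exists (ZG 0); rewrite /= expr0 idmxE.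
- by right; exists (ZG n.+1).
- by left; rewrite GSr -mulmxA G_mulP0 mulmx0.
- by right; exists (ZG m.+1); rewrite /= GSr -mulmxA G_mulQ0.
- by right; exists (ZG m.+1).
- by right; exists (ZG (m.+1 + n.+1)); rewrite /= exprD mulmxE.
Qed.

Lemma zval_mul_word z z0 zs : zval P0 G z *m word P0 G V z0 zs = 0 \/
  exists z3, zval P0 G z *m word P0 G V z0 zs = word P0 G V z3 zs.
Proof.
case: zs => [|z1 zs] /=; first exact: zval_mulmx.
by case: (zval_mulmx z z0) => [h|[z3 h]]; [left | right; exists z3];
  rewrite !mulmxA h ?mul0mx.
Qed.

Lemma word_mulmx z0 zs z0' zs' :
  word P0 G V z0 zs *m word P0 G V z0' zs' = 0 \/
  exists z3 zs3, size zs3 = (size zs + size zs')%N /\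
    word P0 G V z0 zs *m word P0 G V z0' zs' = word P0 G V z3 zs3.
Proof.
elim: zs z0 => [|z1 zs IH] z0 /=.
  by case: (zval_mul_word z0 z0' zs') => [h|[z3 h]]; [left|right; exists z3, zs'].
case: (IH z1) => [h|[z3 [zs3 [hs h]]]]; [left | right; exists z0, (z3 :: zs3)].
  by rewrite -mulmxA h mulmx0.
by rewrite /= hs -mulmxA h.
Qed.

Lemma in_Gamma0 n : Gamma n 0.
Proof.
exists 0%N, (fun _ => 0), (fun _ => ZP), (fun _ => [::]).
by split; [case | rewrite big_ord0].
Qed.

Lemma in_GammaD n X Y : Gamma n X -> Gamma n Y -> Gamma n (X + Y).
Proof.
move=> [k1 [c1 [a1 [s1 [h1 ->]]]]] [k2 [c2 [a2 [s2 [h2 ->]]]]].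
pose glue T (f1 : 'I_k1 -> T) (f2 : 'I_k2 -> T) i :=
  match split i with inl a => f1 a | inr b => f2 b end.
exists (k1 + k2)%N, (glue _ c1 c2), (glue _ a1 a2), (glue _ s1 s2); split.
  by move=> i; rewrite /glue; case: (split i).
rewrite big_split_ord /glue /=; congr (_ + _); apply: eq_bigr => i _.
  by rewrite -[lshift _ _]/(unsplit (inl _)) unsplitK.
by rewrite -[rshift _ _]/(unsplit (inr _)) unsplitK.
Qed.

Lemma in_GammaZ n c X : Gamma n X -> Gamma n (c *: X).
Proof.
move=> [k [c1 [a [s [hs ->]]]]]; exists k, (fun i => c * c1 i), a, s.
by split=> //; rewrite scaler_sumr; apply: eq_bigr => i _; rewrite scalerA.
Qed.

Lemma in_GammaN n X : Gamma n X -> Gamma n (- X).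
Proof. by rewrite -scaleN1r; apply: in_GammaZ. Qed.

Lemma in_GammaB n X Y : Gamma n X -> Gamma n Y -> Gamma n (X - Y).
Proof. by move=> hX /in_GammaN; apply: in_GammaD. Qed.

Lemma in_Gamma_sum n (I : Type) (r : seq I) (P : pred I) F :
  (forall i, P i -> Gamma n (F i)) -> Gamma n (\sum_(i <- r | P i) F i).
Proof. by move=> h; apply: big_ind => //; [apply: in_Gamma0 | apply: in_GammaD]. Qed.

Lemma word_in_Gamma z0 zs : Gamma (size zs) (word P0 G V z0 zs).
Proof.
exists 1%N, (fun _ => 1), (fun _ => z0), (fun _ => zs).
by split=> //; rewrite big_ord1 scale1r.
Qed.

Lemma in_GammaM m n X Y : Gamma m X -> Gamma n Y -> Gamma (m + n) (X *m Y).
Proof.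
move=> [k1 [c1 [a1 [s1 [h1 ->]]]]] [k2 [c2 [a2 [s2 [h2 ->]]]]].
rewrite mulmx_suml; apply: in_Gamma_sum => i _.
rewrite mulmx_sumr; apply: in_Gamma_sum => j _.
rewrite -scalemxAl -scalemxAr; apply/in_GammaZ/in_GammaZ.
case: (word_mulmx (a1 i) (s1 i) (a2 j) (s2 j)) => [->|[z3 [zs3 [hs ->]]]].
  exact: in_Gamma0.
have -> : (m + n = size zs3)%N by rewrite hs h1 h2.
exact: word_in_Gamma.
Qed.

Lemma Vod_in_Gamma : Gamma 1 (Vod P0 V).
Proof.
by apply: in_GammaD; [apply: (word_in_Gamma ZP [:: ZQ]) | apply: (word_in_Gamma ZQ [:: ZP])].
Qed.

Lemma Vd_in_Gamma : Gamma 1 (Vd P0 V).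
Proof.
by apply: in_GammaD; [apply: (word_in_Gamma ZP [:: ZP]) | apply: (word_in_Gamma ZQ [:: ZQ])].
Qed.

Lemma Lop_in_Gamma n X : Gamma n X -> Gamma n (Lop P0 G X).
Proof.
have GP : Gamma 0 P0 := word_in_Gamma ZP [::].
have GG : Gamma 0 G by have := word_in_Gamma (ZG 1) [::]; rewrite /= expr1.
move=> hX; apply: in_GammaB.
  by have := in_GammaM (in_GammaM GP hX) GG; rewrite addn0.
by have := in_GammaM (in_GammaM GG hX) GP; rewrite addn0.
Qed.

Lemma ad_in_Gamma m n S X : Gamma m S -> Gamma n X -> Gamma (m + n) (ad S X).
Proof.
move=> hS hX; apply: in_GammaB; first exact: in_GammaM.
by rewrite addnC; apply: in_GammaM.
Qed.

Section GeneratorSequence.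
Variables (S : nat -> 'M[C]_d) (m : nat).
Hypothesis S_in_Gamma : forall i, (i <= m)%N -> Gamma i (S i).

Lemma foldr_ad_in_Gamma (s : seq 'I_m.+1) :
  Gamma (\sum_(i <- s) (i : nat)).+1
    (foldr (fun (i : 'I_m.+1) X => ad (S i) X) (Vod P0 V) s).
Proof.
elim: s => [|i s IH] /=; first by rewrite big_nil; apply: Vod_in_Gamma.
rewrite big_cons -addnS; apply: ad_in_Gamma IH; apply: S_in_Gamma.
by rewrite -ltnS.
Qed.

Lemma Shat_of_in_Gamma k : Gamma m.+1 (Shat_of P0 V S k m).
Proof.
apply: in_Gamma_sum => t /andP[_ /eqP sum_t].
by have := foldr_ad_in_Gamma t; rewrite sum_t.
Qed.

End GeneratorSequence.

Lemma Snext_in_Gamma S n : (0 < n)%N ->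
  (forall i, (i <= n.-1)%N -> Gamma i (S i)) -> Gamma n (Snext P0 G V S n).
Proof.
move=> n_gt0 S_in_Gamma; rewrite /Snext.
case: eqP => [->|_]; first exact: Lop_in_Gamma Vod_in_Gamma.
case: eqP => [n2|_].
  by subst n; apply/in_GammaN/Lop_in_Gamma/(ad_in_Gamma Vd_in_Gamma)/S_in_Gamma.
apply: in_GammaD.
  apply/in_GammaN/Lop_in_Gamma.
  by have := ad_in_Gamma Vd_in_Gamma (S_in_Gamma n.-1 (leqnn _)); rewrite add1n prednK.
apply: in_Gamma_sum => j _; apply/in_GammaZ/Lop_in_Gamma.
by have := Shat_of_in_Gamma S_in_Gamma (2 * j); rewrite prednK.
Qed.

Lemma size_Sseq N : size (Sseq P0 G V N) = N.+1.
Proof. by elim: N => //= N IH; rewrite size_rcons IH. Qed.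

Lemma Sgen_in_Gamma n : Gamma n (Sgen P0 G V n).
Proof.
suff Sseq_in_Gamma N i : (i <= N)%N -> Gamma i (Sseq P0 G V N)`_i.
  exact: Sseq_in_Gamma.
elim: N i => [|N IH] i i_le.
  by move: i_le; rewrite leqn0 => /eqP ->; apply: in_Gamma0.
rewrite /= nth_rcons size_Sseq; case: ltnP => [|i_ge]; first exact: IH.
have -> : i = N.+1 by apply/eqP; rewrite eqn_leq i_le.
by rewrite eqxx; apply: Snext_in_Gamma => // j; apply: IH.
Qed.

Definition offdiag X := P0 *m X *m P0 = 0 /\ Q0 *m X *m Q0 = 0.
Definition blockdiag X := P0 *m X *m Q0 = 0 /\ Q0 *m X *m P0 = 0.

Lemma mulmxA_contract (A B D E : 'M[C]_d) : B *m D = E -> A *m B *m D = A *m E.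
Proof. by move=> <-; rewrite mulmxA. Qed.

Ltac block_simpl :=
  rewrite ?Q0_def;
  rewrite ?(mulmxDl, mulmxDr, mulmxBl, mulmxBr, mulmxN, mulNmx, mulmxA, opprK);
  rewrite ?(mulmxA_contract _ P0_idem, mulmxA_contract _ P0_mulQ0,
    mulmxA_contract _ Q0_mulP0, mulmxA_contract _ Q0_idem,
    mulmxA_contract _ P0_mulG, mulmxA_contract _ G_mulP0,
    P0_idem, P0_mulQ0, Q0_mulP0, Q0_idem, P0_mulG, G_mulP0);
  rewrite ?(mulmxN, mulNmx, opprK, mul0mx, mulmx0, add0r, addr0, subr0,
    sub0r, oppr0, subrr).

Lemma offdiag0 : offdiag 0.
Proof. by split; rewrite mulmx0 mul0mx. Qed.

Lemma offdiagD X Y : offdiag X -> offdiag Y -> offdiag (X + Y).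
Proof. by move=> [a b] [c e]; split; rewrite mulmxDr mulmxDl ?a ?b ?c ?e addr0. Qed.

Lemma offdiagZ c X : offdiag X -> offdiag (c *: X).
Proof. by move=> [a b]; split; rewrite -scalemxAr -scalemxAl ?a ?b scaler0. Qed.

Lemma offdiagN X : offdiag X -> offdiag (- X).
Proof. by rewrite -scaleN1r; apply: offdiagZ. Qed.

Lemma offdiag_sum (I : Type) (r : seq I) (P : pred I) F :
  (forall i, P i -> offdiag (F i)) -> offdiag (\sum_(i <- r | P i) F i).
Proof. by move=> h; apply: big_ind => //; [apply: offdiag0 | apply: offdiagD]. Qed.

Lemma Lop_offdiag X : offdiag (Lop P0 G X).
Proof. by rewrite /Lop; split; block_simpl. Qed.

Lemma Vod_offdiag : offdiag (Vod P0 V).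
Proof. by rewrite /Vod; split; block_simpl. Qed.

Lemma block_decomp X :
  X = P0 *m X *m P0 + P0 *m X *m Q0 + Q0 *m X *m P0 + Q0 *m X *m Q0.
Proof.
have PQ1 : P0 + Q0 = 1%:M by rewrite -Q0_def /Qc addrC subrK.
rewrite -{1}[X]mul1mx -{1}[X]mulmx1 -PQ1.
by rewrite mulmxDl mulmxDr !mulmxDr !mulmxA !addrA.
Qed.

Lemma offdiagE X : offdiag X -> X = P0 *m X *m Q0 + Q0 *m X *m P0.
Proof. by move=> [a b]; rewrite {1}[X]block_decomp a b add0r addr0. Qed.

Lemma blockdiagE X : blockdiag X -> X = P0 *m X *m P0 + Q0 *m X *m Q0.
Proof. by move=> [a b]; rewrite {1}[X]block_decomp a b !addr0. Qed.

Lemma ad_offdiag S X : offdiag S -> offdiag X -> blockdiag (ad S X).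
Proof.
by move=> hS hX; rewrite /blockdiag /ad (offdiagE hS) (offdiagE hX); split; block_simpl.
Qed.

Lemma ad_offdiag_blockdiag S X : offdiag S -> blockdiag X -> offdiag (ad S X).
Proof.
by move=> hS hX; rewrite /offdiag /ad (offdiagE hS) (blockdiagE hX); split; block_simpl.
Qed.

Lemma mulmx_offdiag A B : offdiag A -> offdiag B -> blockdiag (A *m B).
Proof.
by move=> hA hB; rewrite /blockdiag (offdiagE hA) (offdiagE hB); split; block_simpl.
Qed.

Lemma corner_mulmx_blockdiag X Y : blockdiag X ->
  P0 *m (X *m Y) *m P0 = (P0 *m X *m P0) *m (P0 *m Y *m P0).
Proof. by move=> hX; rewrite {1}(blockdiagE hX); block_simpl. Qed.

Lemma Snext_offdiag S n : offdiag (Snext P0 G V S n).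
Proof.
rewrite /Snext; case: ifP => _; first exact: Lop_offdiag.
case: ifP => _; first exact/offdiagN/Lop_offdiag.
apply: offdiagD; first exact/offdiagN/Lop_offdiag.
by apply: offdiag_sum => j _; apply/offdiagZ/Lop_offdiag.
Qed.

Lemma Sgen_offdiag n : offdiag (Sgen P0 G V n).
Proof.
suff Sseq_offdiag N i : offdiag (Sseq P0 G V N)`_i by apply: Sseq_offdiag.
elim: N i => [|N IH] i; first by case: i => [|[|i]]; apply: offdiag0.
rewrite /= nth_rcons; case: ifP => _; first exact: IH.
by case: ifP => _; [apply: Snext_offdiag | apply: offdiag0].
Qed.

Lemma foldr_ad_Vod_parity m (S : nat -> 'M[C]_d) (s : seq 'I_m.+1) :
  (forall i, offdiag (S i)) ->
  let X := foldr (fun (i : 'I_m.+1) X => ad (S i) X) (Vod P0 V) s in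
  if odd (size s) then blockdiag X else offdiag X.
Proof.
move=> S_offdiag; elim: s => [|i s IH] /=; first exact: Vod_offdiag.
by case: (odd (size s)) IH => /= IH; [apply: ad_offdiag_blockdiag | apply: ad_offdiag].
Qed.

Definition scalar_P0 X := exists c : C, X = c *: P0.

Lemma scalar_P0_0 : scalar_P0 0.
Proof. by exists 0; rewrite scale0r. Qed.

Lemma scalar_P0D X Y : scalar_P0 X -> scalar_P0 Y -> scalar_P0 (X + Y).
Proof. by move=> [a ->] [b ->]; exists (a + b); rewrite scalerDl. Qed.

Lemma scalar_P0B X Y : scalar_P0 X -> scalar_P0 Y -> scalar_P0 (X - Y).
Proof. by move=> [a ->] [b ->]; exists (a - b); rewrite scalerBl. Qed.

Lemma scalar_P0M X Y : scalar_P0 X -> scalar_P0 Y -> scalar_P0 (X *m Y).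
Proof.
by move=> [a ->] [b ->]; exists (a * b); rewrite -scalemxAl -scalemxAr P0_idem scalerA.
Qed.

Lemma Shat_of0 S k : (0 < k)%N -> Shat_of P0 V S k 0 = 0.
Proof.
move=> k_gt0; apply: big1 => -[[|[[|i] hi] s] /= /eqP size_t] //.
by rewrite -size_t in k_gt0.
Qed.

Section ScalarCorners.
Variable L : nat.
Hypothesis corner_Gamma :
  forall n, (n < L)%N -> forall X, Gamma n X -> scalar_P0 (P0 *m X *m P0).

Definition offdiag_Gamma n X := [/\ offdiag X, Gamma n X & (0 < n)%N].

Lemma corner_mul4 A B D E a b c e :
  offdiag_Gamma a A -> offdiag_Gamma b B -> offdiag_Gamma c D -> offdiag_Gamma e E ->
  (a + b + c + e = L)%N -> scalar_P0 (P0 *m A *m B *m D *m E *m P0).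
Proof.
move=> [oA gA pA] [oB gB pB] [oD gD pD] [oE gE pE] sum_L.
have -> : P0 *m A *m B *m D *m E *m P0 = P0 *m (A *m B *m (D *m E)) *m P0.
  by rewrite !mulmxA.
rewrite corner_mulmx_blockdiag; last exact: mulmx_offdiag.
by apply: scalar_P0M;
  [apply: corner_Gamma (in_GammaM gA gB) | apply: corner_Gamma (in_GammaM gD gE)]; lia.
Qed.

Lemma corner_ad3 A B D E a b c e :
  offdiag_Gamma a A -> offdiag_Gamma b B -> offdiag_Gamma c D -> offdiag_Gamma e E ->
  (a + b + c + e = L)%N -> scalar_P0 (P0 *m ad A (ad B (ad D E)) *m P0).
Proof.
move=> hA hB hD hE sum_L.
rewrite /ad ?(mulmxDl, mulmxDr, mulmxBl, mulmxBr, mulmxN, mulNmx, mulmxA).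
repeat (apply: scalar_P0B || apply: scalar_P0D).
all: eapply corner_mul4; try eassumption; lia.
Qed.

Lemma corner_Shat_below j n : (1 <= j)%N -> (n < L)%N ->
  scalar_P0 (P0 *m Shat P0 G V (2 * j).-1 n.-1 *m P0).
Proof.
move=> j_ge1; case: n => [|n] n_lt.
  by rewrite /Shat Shat_of0 ?mulmx0 ?mul0mx; [apply: scalar_P0_0 | lia].
exact/corner_Gamma/(Shat_of_in_Gamma (fun i _ => Sgen_in_Gamma i)).
Qed.

Lemma corner_Shat_at j : (1 < j)%N ->
  scalar_P0 (P0 *m Shat P0 G V (2 * j).-1 L.-1 *m P0).
Proof.
move=> j_gt1; have k_ge3 : (3 <= (2 * j).-1)%N by lia.
case L_eq : L => [|m].
  by rewrite /Shat Shat_of0 ?mulmx0 ?mul0mx; [apply: scalar_P0_0 | lia].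
rewrite -pred_Sn /Shat /Shat_of mulmx_sumr mulmx_suml.
apply: big_ind; [exact: scalar_P0_0 | exact: scalar_P0D |].
move=> -[[|i1 [|i2 [|i3 s]]] /= /eqP size_t]; rewrite -size_t // in k_ge3.
case/andP=> /and4P[i1_gt0 i2_gt0 i3_gt0 _]; rewrite !big_cons => /eqP sum_t.
have S_offdiag_Gamma (i : 'I_m.+1) : (0 < i)%N -> offdiag_Gamma i (Sgen P0 G V i).
  by split => //; [apply: Sgen_offdiag | apply: Sgen_in_Gamma].
apply: (corner_ad3 (S_offdiag_Gamma _ i1_gt0) (S_offdiag_Gamma _ i2_gt0)
  (S_offdiag_Gamma _ i3_gt0) (e := (\sum_(i <- s) (i : nat)).+1)); last first.
  by rewrite L_eq -[in RHS]sum_t !addnA addnS.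
split=> //; last exact: foldr_ad_in_Gamma (fun i _ => Sgen_in_Gamma i) s.
have s_even : ~~ odd (size (s : seq 'I_m.+1)).
  have -> : size (s : seq 'I_m.+1) = (2 * (j - 2))%N by lia.
  by rewrite oddM.
by have := foldr_ad_Vod_parity s Sgen_offdiag; rewrite /= (negbTE s_even).
Qed.

End ScalarCorners.

End ProjectionCalculus.

Theorem lemma5 (C : numClosedFieldType) (d : nat) (H0 V P0 : 'M[C]_d)
    (E0 : C) (L : nat) :
  is_hermitian H0 -> ground_energy H0 E0 -> ground_proj H0 E0 P0 ->
  is_hermitian V ->
  let G := resolvent H0 E0 P0 in
  (forall n : nat, (n < L)%N ->
     forall X, in_Gamma P0 G V n X -> exists c : C, P0 *m X *m P0 = c *: P0) ->
  (forall (j n : nat), (1 <= j)%N -> (n < L)%N ->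
     exists c : C, P0 *m Shat P0 G V (2 * j).-1 n.-1 *m P0 = c *: P0) /\
  (forall j : nat, (1 < j)%N ->
     exists c : C, P0 *m Shat P0 G V (2 * j).-1 L.-1 *m P0 = c *: P0).
Proof.
move=> _ _ [P0_idem _ _] _ G corner_Gamma.
have Q0_mulG : Qc P0 *m G = G by rewrite /G /resolvent !mulmxA (Q0_idem erefl P0_idem).
have G_mulQ0 : G *m Qc P0 = G by rewrite /G /resolvent -!mulmxA (Q0_idem erefl P0_idem).
split=> [j n | j]; first exact: (corner_Shat_below erefl P0_idem Q0_mulG G_mulQ0).
exact: (corner_Shat_at erefl P0_idem Q0_mulG G_mulQ0).
Qed.
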